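(* Let $f:\mathbb{X}(N,k)\to\mathbb{R}$ be a monotone $k$-submodular function, let $\hat{\mathbf{x}}\in\mathcal{X}$, and let $\hat{\mathbf{S}}=(\hat S_1,\dots,\hat S_k)$ be an optimal solution of the defender's problem defining $\Phi_D(\hat{\mathbf{x}})$, so that $\Phi_D(\hat{\mathbf{x}})=f(\hat{\mathbf{S}})$. Then for every $\mathbf{x}\in\mathcal{X}$, $$\Phi_D(\mathbf{x})\;\ge\;\Phi_D(\hat{\mathbf{x}})-\sum_{q=1}^k\sum_{i\in\hat S_q}\rho_{q,i}(\boldsymbol{\emptyset})\,x_{q,i}.$$
   Context: Let $n,k$ be positive integers and $N=\{1,\dots,n\}$. $\mathbb{X}(N,k)$ denotes the set of $k$-tuples $\mathbf{S}=(S_1,\dots,S_k)$ of pairwise disjoint subsets of $N$; such a tuple is identified with $\mathbf{s}\in\{0,1\}^{kn}$ where $s_{q,i}=1$ iff $i\in S_q$. For $\mathbf{X},\mathbf{Y}\in\mathbb{X}(N,k)$ let $\mathbf{X}\sqcap\mathbf{Y}=(X_1\cap Y_1,\dots,X_k\cap Y_k)$ and $\mathbf{X}\sqcup\mathbf{Y}$ be the tuple whose $i$-th component is $(X_i\cup Y_i)\setminus\bigcup_{q\ne i}(X_q\cup Y_q)$. A function $f:\mathbb{X}(N,k)\to\mathbb{R}$ is $k$-submodular if $f(\mathbf{X})+f(\mathbf{Y})\ge f(\mathbf{X}\sqcap\mathbf{Y})+f(\mathbf{X}\sqcup\mathbf{Y})$ for all $\mathbf{X},\mathbf{Y}$, and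 monotone if $f(\mathbf{X})\le f(\mathbf{Y})$ whenever $X_q\subseteq Y_q$ for all $q$. $\boldsymbol{\emptyset}=(\emptyset,\dots,\emptyset)$. For $\mathbf{X}\in\mathbb{X}(N,k)$, $q\in\{1,\dots,k\}$ and $i\in N\setminus\bigcup_r X_r$, the marginal gain is $\rho_{q,i}(\mathbf{X})=f(X_1,\dots,X_{q-1},X_q\cup\{i\},X_{q+1},\dots,X_k)-f(\mathbf{X})$. Given nonnegative integer budgets $A_1,\dots,A_k$ and $D_1,\dots,D_k$, the attacker's feasible set is $\mathcal{X}=\{\mathbf{x}\in\{0,1\}^{kn}:\sum_{i=1}^n x_{q,i}\le A_q\ \forall q,\ \sum_{q=1}^k x_{q,i}\le 1\ \forall i\in N\}$, and $\Phi_D(\mathbf{x})=\max\{f(\mathbf{S}):\mathbf{S}\in\mathbb{X}(N,k),\ s_{q,i}\le 1-x_{q,i}\ \forall q,i,\ \sum_{i=1}^n s_{q,i}\le D_q\ \forall q\}$. *)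

From mathcomp Require Import all_boot all_order all_algebra.
Set Implicit Arguments. Unset Strict Implicit. Unset Printing Implicit Defensive.
Import Order.TTheory GRing.Theory Num.Theory.
Local Open Scope ring_scope.

(* N = 'I_n (elements 0..n-1 stand for 1..n), types 1..k are 'I_k.
   A k-tuple of subsets of N; X(N,k) is the set of such tuples whose
   components are pairwise disjoint. *)
Definition ktuple (n k : nat) := {ffun 'I_k -> {set 'I_n}}.

Definition pdisj (n k : nat) (X : ktuple n k) : bool :=
  [forall q : 'I_k, forall r : 'I_k, (q != r) ==> [disjoint X q & X r]].

Definition kmeet (n k : nat) (X Y : ktuple n k) : ktuple n k :=
  [ffun q => X q :&: Y q].

Definition kjoin (n k : nat) (X Y : ktuple n k) : ktuple n k :=
  [ffun q => (X q :|: Y q) :\: \bigcup_(r | r != q) (X r :|: Y r)].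

Definition kempty (n k : nat) : ktuple n k := [ffun _ => set0].

Definition kadd (n k : nat) (X : ktuple n k) (q : 'I_k) (i : 'I_n) : ktuple n k :=
  [ffun r => if r == q then i |: X r else X r].

Definition k_submodular (R : realFieldType) (n k : nat) (f : ktuple n k -> R) : Prop :=
  forall X Y, pdisj X -> pdisj Y -> f X + f Y >= f (kmeet X Y) + f (kjoin X Y).

Definition k_monotone (R : realFieldType) (n k : nat) (f : ktuple n k -> R) : Prop :=
  forall X Y, pdisj X -> pdisj Y -> (forall q, X q \subset Y q) -> f X <= f Y.

Definition rho (R : realFieldType) (n k : nat) (f : ktuple n k -> R)
  (q : 'I_k) (i : 'I_n) (X : ktuple n k) : R := f (kadd X q i) - f X.

(* attacker vector x in {0,1}^{kn}: x q i = true iff x_{q,i} = 1 *)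
Definition attack (n k : nat) := 'I_k -> 'I_n -> bool.

Definition attacker_feasible (n k : nat) (A : 'I_k -> nat) (x : attack n k) : Prop :=
  (forall q : 'I_k, (\sum_(i < n) (x q i : nat) <= A q)%N) /\
  (forall i : 'I_n, (\sum_(q < k) (x q i : nat) <= 1)%N).

(* defender feasibility of S against x (S identified with s in {0,1}^{kn}) *)
Definition defender_feasible (n k : nat) (D : 'I_k -> nat) (x : attack n k)
  (S : ktuple n k) : bool :=
  [&& pdisj S,
      [forall q : 'I_k, forall i : 'I_n, (i \in S q) ==> ~~ x q i] &
      [forall q : 'I_k, (#|S q| <= D q)%N]].

(* Phi_D(x) = max of f over defender-feasible S; the empty tuple is always
   feasible, so f(empty) is a valid (attained) default for the max. *)
Definition PhiD (R : realFieldType) (n k : nat) (f : ktuple n k -> R)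
  (D : 'I_k -> nat) (x : attack n k) : R :=
  \big[Order.max/f (kempty n k)]_(S : ktuple n k | defender_feasible D x S) f S.

From mathcomp Require Import all_boot all_order all_algebra.
From mathcomp Require Import lra.
Import Order.TTheory GRing.Theory Num.Theory.
Set Implicit Arguments. Unset Strict Implicit.
Local Open Scope ring_scope.

(* Remove from Shat the elements attacked by x, one at a time.  The result is
   still defender-feasible against x, and by k-submodularity (applied to the
   current tuple and the singleton tuple of the removed element) each removal
   lowers f by at most the gain rho_{q,i}(empty) of that element from the empty
   tuple: marginal gains diminish. *)

Section KTuples.
Variables n k : nat.
Implicit Types (T U : ktuple n k) (q r s : 'I_k) (i j : 'I_n).

Lemma pdisjP T q r j : pdisj T -> q != r -> j \in T q -> j \notin T r.
Proof.
move=> /forallP /(_ q) /forallP /(_ r) /implyP dTqr /dTqr /disjointFr dj jTq.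
by rewrite dj.
Qed.

Lemma pdisj_subset T U : pdisj T -> (forall q, U q \subset T q) -> pdisj U.
Proof.
move=> dT sUT; apply/forallP=> q; apply/forallP=> r; apply/implyP=> qr.
have /implyP/(_ qr) := forallP (forallP dT q) r.
exact: disjointW (sUT q) (sUT r).
Qed.

Definition kunit q i : ktuple n k := kadd (kempty n k) q i.

Lemma in_kunit q i r j : (j \in kunit q i r) = (r == q) && (j == i).
Proof. by rewrite !ffunE; case: (r == q); rewrite ?inE ?in_set0 ?orbF. Qed.

Lemma pdisj_kunit q i : pdisj (kunit q i).
Proof.
apply/forallP=> r; apply/forallP=> s; apply/implyP=> rs.
apply/pred0P=> j; rewrite /= !in_kunit.
by case: (r =P q) rs => [-> qs|] //=; rewrite (eq_sym s) (negbTE qs) andbF.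
Qed.

Lemma kmeet_kunit T q i : i \notin T q -> kmeet T (kunit q i) = kempty n k.
Proof.
move=> iTq; apply/ffunP=> r; apply/setP=> j.
rewrite ffunE inE in_kunit ffunE in_set0.
by case: eqP => [->|_]; case: eqP => [->|_]; rewrite ?andbF ?(negbTE iTq).
Qed.

Lemma kjoin_kunit T q i :
  pdisj T -> (forall r, i \notin T r) -> kjoin T (kunit q i) = kadd T q i.
Proof.
move=> dT iT; apply/ffunP=> r; apply/setP=> j.
rewrite [in LHS]ffunE in_setD.
set Y := kunit q i.
have only_r : j \in T r :|: Y r -> j \notin \bigcup_(s | s != r) (T s :|: Y s).
  move=> jr; apply/bigcupP=> -[s sr]; move: jr; rewrite !inE !in_kunit.
  case/orP=> [jTr | /andP[/eqP rq /eqP ji]]; case/orP=> [jTs | /andP[/eqP sq /eqP ji']].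
  - by rewrite (negbTE (pdisjP dT sr jTs)) in jTr.
  - by rewrite ji' (negbTE (iT r)) in jTr.
  - by rewrite ji (negbTE (iT s)) in jTs.
  - by rewrite sq rq eqxx in sr.
have -> : (j \in kadd T q i r) = (j \in T r :|: Y r).
  by rewrite ffunE inE in_kunit; case: (r == q); rewrite ?inE // orbC.
by case: (boolP (j \in T r :|: Y r)) => [/only_r -> | _]; rewrite ?andbF.
Qed.

Definition kdel T q i : ktuple n k :=
  [ffun r => if r == q then T r :\ i else T r].

Definition ksize T : nat := \sum_(q < k) #|T q|.

Lemma kdel_subset T q i r : kdel T q i r \subset T r.
Proof. by rewrite ffunE; case: (r == q); rewrite ?subsetDl. Qed.

Lemma kaddK T q i : i \in T q -> kadd (kdel T q i) q i = T.
Proof.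
by move=> iTq; apply/ffunP=> r; rewrite !ffunE; case: eqP => [->|] //; rewrite setD1K.
Qed.

Lemma notin_kdel T q i r : pdisj T -> i \in T q -> i \notin kdel T q i r.
Proof.
move=> dT iTq; rewrite ffunE; case: eqP => [_|/eqP rq]; first by rewrite !inE eqxx.
by apply: pdisjP dT _ iTq; rewrite eq_sym.
Qed.

Lemma ksize_kdel T q i : i \in T q -> ksize T = (ksize (kdel T q i)).+1.
Proof.
move=> iTq; rewrite /ksize (bigD1 q) //= [in RHS](bigD1 q) //= ffunE eqxx.
rewrite (cardsD1 i (T q)) iTq add1n addSn; congr (_ + _).+1.
by apply: eq_bigr => r /negbTE rq; rewrite ffunE rq.
Qed.
End KTuples.

Section KSubmodular.
Variables (R : realFieldType) (n k : nat) (f : ktuple n k -> R).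
Hypothesis f_ksub : k_submodular f.
Implicit Types (T U : ktuple n k) (q r : 'I_k) (i j : 'I_n).

Lemma rho_le_rho_kempty T q i :
  pdisj T -> (forall r, i \notin T r) -> rho f q i T <= rho f q i (kempty n k).
Proof.
move=> dT iT; have := f_ksub dT (pdisj_kunit q i).
by rewrite kmeet_kunit // kjoin_kunit // /rho /kunit; lra.
Qed.

Lemma ksubmodular_le_subset_gains T U :
  pdisj T -> (forall q, U q \subset T q) ->
  f T <= f U + \sum_(q < k) \sum_(i in T q :\: U q) rho f q i (kempty n k).
Proof.
have [m] := ubnP (ksize T); elim: m T => // m IH T szT dT sUT.
case: (boolP [exists q, exists i, i \in T q :\: U q]) => [|none]; last first.
  have -> : T = U.
    apply/ffunP=> q; apply/eqP; rewrite eqEsubset sUT andbT; apply/subsetP=> i iT.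
    apply: contraR none => iU; apply/existsP; exists q; apply/existsP; exists i.
    by rewrite inE iU.
  by rewrite big1 ?addr0 // => q _; rewrite setDv big_set0.
case/existsP=> q /existsP[i iTU]; move: (iTU); rewrite inE => /andP[iU iT].
set T' := kdel T q i.
have dT' : pdisj T' := pdisj_subset dT (kdel_subset T q i).
have sUT' r : U r \subset T' r.
  by rewrite ffunE; case: eqP => [->|_]; rewrite ?subsetD1 ?sUT ?iU.
have szT' : (ksize T' < m)%N by move: szT; rewrite (ksize_kdel iT).
have gainsE : \sum_(r < k) \sum_(j in T r :\: U r) rho f r j (kempty n k) =
    rho f q i (kempty n k)
    + \sum_(r < k) \sum_(j in T' r :\: U r) rho f r j (kempty n k).
  rewrite (bigD1 q) //= [in RHS](bigD1 q) //= (big_setD1 i iTU) addrA.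
  rewrite ffunE eqxx setDDl setUC -setDDl; congr (_ + _).
  by apply: eq_bigr => r /negbTE rq; rewrite ffunE rq.
have fTE : f T = f T' + rho f q i T' by rewrite /rho kaddK //; lra.
have := rho_le_rho_kempty q dT' (fun r => notin_kdel r dT iT).
have := IH T' szT' dT' sUT'.
by rewrite fTE gainsE; lra.
Qed.
End KSubmodular.

Definition unattacked n k (x : attack n k) (T : ktuple n k) : ktuple n k :=
  [ffun q => T q :\: [set i | x q i]].

Lemma unattacked_subset n k (x : attack n k) (T : ktuple n k) q :
  unattacked x T q \subset T q.
Proof. by rewrite ffunE subsetDl. Qed.

Lemma defender_feasible_unattacked n k (D : 'I_k -> nat) (x y : attack n k)
    (T : ktuple n k) :
  defender_feasible D y T -> defender_feasible D x (unattacked x T).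
Proof.
case/and3P=> dT _ /forallP TD; apply/and3P; split.
- exact: pdisj_subset dT (unattacked_subset x T).
- by apply/forallP=> q; apply/forallP=> i; rewrite ffunE !inE; apply/implyP=> /andP[].
- apply/forallP=> q; apply: leq_trans (TD q).
  exact/subset_leq_card/unattacked_subset.
Qed.

Lemma sum_attacked_gains (R : realFieldType) n k (x : attack n k) (T : ktuple n k)
    q (g : 'I_n -> R) :
  \sum_(i in T q :\: unattacked x T q) g i = \sum_(i in T q) g i * (x q i)%:R.
Proof.
rewrite (eq_bigl (fun i => (i \in T q) && x q i)); last first.
  by move=> i; rewrite ffunE !inE; case: (x q i); rewrite /= ?andbT ?andbF ?andNb.
rewrite [LHS]big_mkcond [RHS]big_mkcond; apply: eq_bigr => i _.
by case: (i \in T q); case: (x q i); rewrite ?mulr1 ?mulr0.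
Qed.

Lemma le_PhiD (R : realFieldType) n k (f : ktuple n k -> R) D (x : attack n k) S :
  defender_feasible D x S -> f S <= PhiD f D x.
Proof. exact: le_bigmax_cond. Qed.

Theorem theorem1 (R : realFieldType) (n k : nat) (f : ktuple n k -> R)
  (A D : 'I_k -> nat) (xhat : attack n k) (Shat : ktuple n k) :
  k_submodular f -> k_monotone f ->
  attacker_feasible A xhat ->
  defender_feasible D xhat Shat ->
  PhiD f D xhat = f Shat ->
  forall x : attack n k, attacker_feasible A x ->
    PhiD f D x >= PhiD f D xhat
      - \sum_(q < k) \sum_(i in Shat q) rho f q i (kempty n k) * (x q i)%:R.
Proof.
move=> f_ksub _ _ Shat_feas -> x _.
apply: le_trans (le_PhiD f (defender_feasible_unattacked x Shat_feas)).
have /and3P[dShat _ _] := Shat_feas.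
have := ksubmodular_le_subset_gains f_ksub dShat (unattacked_subset x Shat).
under eq_bigr do rewrite sum_attacked_gains.
by move=> ?; lra.
Qed.
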